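(* Let $(N,{\mathcal{S}},K)$ be an instance of MaxCover with $|{\mathcal{S}}|=m\ge K$ sets, where every element of $N$ belongs to at least $p\ge1$ sets of ${\mathcal{S}}$. Then the greedy algorithm returns $K$ sets covering at least $\left(1-e^{-\max(pK/m,\,1)}\right)\cdot\mathrm{OPT}$ elements, where $\mathrm{OPT}$ is the maximum number of elements coverable by $K$ sets of ${\mathcal{S}}$.
   Context: The greedy algorithm: start with $C=\emptyset$; for $i=1,\dots,K$, add to $C$ a set $S\in{\mathcal{S}}\setminus C$ maximizing $|S\setminus\bigcup_{T\in C}T|$ (ties broken arbitrarily); return $C$. *)

From mathcomp Require Import all_boot.
From Stdlib Require Import Reals.

Set Implicit Arguments.
Unset Strict Implicit.
Unset Printing Implicit Defensive.

Section MaxCover.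
Variable T : finType.

Definition cover_seq (C : seq {set T}) : {set T} := \bigcup_(A <- C) A.

Definition greedy_choice (S : {set {set T}}) (prev : seq {set T}) (A : {set T}) : bool :=
  [&& A \in S, A \notin prev &
   [forall B in S, (B \notin prev) ==>
      (#|B :\: cover_seq prev| <= #|A :\: cover_seq prev|)]].

(* C = [:: C_1; ...; C_K] is a possible output (run) of the greedy algorithm
   with K = size C iterations. *)
Definition greedy_run (S : {set {set T}}) (C : seq {set T}) : Prop :=
  forall i, i < size C -> greedy_choice S (take i C) (nth set0 C i).

Definition OPT (S : {set {set T}}) (K : nat) : nat :=
  \max_(D in powerset S | #|D| == K) #|\bigcup_(A in D) A|.

End MaxCover.

From mathcomp Require Import all_boot zify.
From Stdlib Require Import Reals Lra Psatz.

Set Implicit Arguments.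
Unset Strict Implicit.
Unset Printing Implicit Defensive.

(* Let c_i be the set covered after i greedy steps and g_i = |c_i|.  The
   whole argument rests on one counting fact (greedy_progress): if every
   element of a target set U lies in at least q sets of a subfamily D of S,
   then the elements of U \ c_i can be charged to the gains of the sets of D,
   each of which is at most the gain of the greedy choice, so
        q * |U \ c_i| <= |D| * (g_{i+1} - g_i).
   With a = q/|D| this gives the recurrence a (|U| - g_i) <= g_{i+1} - g_i,
   which solves to g_K >= (1 - (1-a)^K) |U| >= (1 - e^{-aK}) |U|
   (deficit_recurrence, greedy_multicover_bound).
   The theorem follows from two instances:
   - U = N, D = S, q = p, giving ratio pK/m, together with OPT <= |N|;
   - U = an optimal union of K sets, D = those sets, q = 1, giving ratio 1. *)

Section Counting.
Variable T : finType.

Lemma card_setU_new (X A : {set T}) : #|X :|: A| = #|X| + #|A :\: X|.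
Proof.
rewrite cardsU cardsD setIC.
have := subset_leq_card (subsetIl A X); lia.
Qed.

Lemma double_count (X : {set T}) (D : {set {set T}}) :
  \sum_(x in X) #|[set B in D | x \in B]| = \sum_(B in D) #|X :&: B|.
Proof.
have incidences (I : finType) (P Q : pred I) :
    #|[set y in P | Q y]| = \sum_(y in P) Q y.
  rewrite -sum1_card [LHS]big_mkcond [RHS]big_mkcond /=.
  by apply: eq_bigr => y _; rewrite inE; case: (y \in P); case: (Q y).
transitivity (\sum_(x in X) \sum_(B in D) (x \in B)).
  by apply: eq_bigr => x _; rewrite incidences.
rewrite exchange_big; apply: eq_bigr => B _.
by rewrite -incidences; congr #|_|; apply/setP => y; rewrite !inE.
Qed.

Lemma multicover_sum (U : {set T}) (D : {set {set T}}) (q : nat) :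
  (forall x, x \in U -> q <= #|[set B in D | x \in B]|) ->
  q * #|U| <= \sum_(B in D) #|U :&: B|.
Proof.
move=> multU; rewrite -double_count -sum1_card big_distrr /=.
by apply: leq_sum => x xU; rewrite muln1 multU.
Qed.

End Counting.

Section Greedy.
Variables (T : finType) (S : {set {set T}}).

Lemma cover_rcons (s : seq {set T}) (A : {set T}) :
  cover_seq (rcons s A) = cover_seq s :|: A.
Proof. by rewrite /cover_seq big_rcons. Qed.

(* A greedy choice has maximal gain among all sets of S: a set that was
   already chosen has no gain at all. *)
Lemma greedy_gain_max (prev : seq {set T}) (A B : {set T}) :
  greedy_choice S prev A -> B \in S ->
  #|B :\: cover_seq prev| <= #|A :\: cover_seq prev|.
Proof.
case/and3P=> _ _ /forall_inP maxA BS.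
have [Bprev | Bnew] := boolP (B \in prev); last exact: implyP (maxA B BS) Bnew.
suff -> : B :\: cover_seq prev = set0 by rewrite cards0.
by apply/eqP; rewrite setD_eq0 /cover_seq bigcup_seq (bigcup_sup B).
Qed.

(* The key step: the part of a q-fold covered target U not yet covered is
   paid for by the gains of the members of D, each bounded by the greedy gain. *)
Lemma greedy_progress (prev : seq {set T}) (A U : {set T})
    (D : {set {set T}}) (q : nat) :
  greedy_choice S prev A -> D \subset S ->
  (forall x, x \in U -> q <= #|[set B in D | x \in B]|) ->
  q * #|U :\: cover_seq prev| <= #|D| * #|A :\: cover_seq prev|.
Proof.
move=> greedyA DS multU; set c := cover_seq prev.
have multUc x : x \in U :\: c -> q <= #|[set B in D | x \in B]|.
  by rewrite inE => /andP[_ /multU].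
apply: leq_trans (multicover_sum multUc) _.
rewrite -sum1_card big_distrl /=; apply: leq_sum => B BD; rewrite mul1n.
apply: leq_trans (greedy_gain_max greedyA (subsetP DS B BD)).
by apply: subset_leq_card; apply/subsetP => x; rewrite !inE => /andP[/andP[-> _] ->].
Qed.

Lemma greedy_run_step (C : seq {set T}) (i : nat) :
  greedy_run S C -> i < size C ->
  greedy_choice S (take i C) (nth set0 C i) /\
  #|cover_seq (take i.+1 C)|
    = #|cover_seq (take i C)| + #|nth set0 C i :\: cover_seq (take i C)|.
Proof.
move=> run iC; split; first exact: run.
by rewrite (take_nth set0 iC) cover_rcons card_setU_new.
Qed.

End Greedy.

Section Optimum.
Variables (T : finType) (S : {set {set T}}) (K : nat).

Lemma OPT_le_ground (N : {set T}) :
  (forall A, A \in S -> A \subset N) -> OPT S K <= #|N|.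
Proof.
move=> SN; apply/bigmax_leqP => D /andP[]; rewrite powersetE => DS _.
by apply/subset_leq_card/bigcupsP => B BD; apply/SN/(subsetP DS).
Qed.

Lemma OPT_attained :
  K <= #|S| ->
  exists2 D : {set {set T}}, D \subset S /\ #|D| = K
                           & OPT S K = #|\bigcup_(A in D) A|.
Proof.
case/card_geqP=> s [uniq_s size_s sS].
have feasible : 0 < #|[pred D in powerset S | #|D| == K]|.
  apply/card_gt0P; exists [set A in s].
  rewrite !inE cardsE (card_uniqP uniq_s) size_s eqxx andbT.
  by apply/subsetP => A; rewrite inE => /sS.
have [D] := eq_bigmax_cond (fun D : {set {set T}} => #|\bigcup_(A in D) A|) feasible.
rewrite !inE => /andP[DS /eqP DK] optD.
by exists D => //; rewrite -optD.
Qed.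

End Optimum.

Section Recurrence.
Local Open Scope R_scope.

Lemma one_minus_exp_nonneg (r : R) : 0 <= r -> 0 <= 1 - exp (- r).
Proof.
move=> r0; have [rpos | <-] := Rle_lt_or_eq_dec 0 r r0.
- have := exp_increasing (- r) 0; rewrite exp_0; lra.
- rewrite Ropp_0 exp_0; lra.
Qed.

(* (1 - a)^n <= e^{-an}, from 1 - a <= e^{-a}. *)
Lemma pow_one_minus_le_exp (a : R) (n : nat) :
  0 <= a <= 1 -> (1 - a) ^ n <= exp (- (a * INR n)).
Proof.
move=> a01; elim: n => [|n IH]; first by rewrite /= Rmult_0_r Ropp_0 exp_0; lra.
have -> : - (a * INR n.+1) = - a + - (a * INR n) by rewrite S_INR; ring.
rewrite exp_plus /=; apply: Rmult_le_compat => //.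
- lra.
- by apply: pow_le; lra.
- by have := exp_ineq1_le (- a); lra.
Qed.

Lemma deficit_recurrence (g : nat -> R) (Q a : R) (K : nat) :
  0 <= a <= 1 -> g O = 0 -> 0 <= Q ->
  (forall i, (i < K)%nat -> a * (Q - g i) <= g i.+1 - g i) ->
  (1 - exp (- (a * INR K))) * Q <= g K.
Proof.
move=> a01 g0 Q0 step.
have deficit i : (i <= K)%nat -> Q - g i <= (1 - a) ^ i * Q.
  elim: i => [|i IH] iK; first by rewrite g0 /=; lra.
  have := step i iK; have := IH (ltnW iK) => IHi stepi.
  have : (1 - a) * (Q - g i) <= (1 - a) * ((1 - a) ^ i * Q).
    by apply: Rmult_le_compat_l; lra.
  rewrite /=; lra.
have := deficit K (leqnn K).
have : (1 - a) ^ K * Q <= exp (- (a * INR K)) * Q.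
  by apply: Rmult_le_compat_r => //; apply: pow_one_minus_le_exp.
lra.
Qed.

End Recurrence.

Lemma greedy_multicover_bound (T : finType) (S D : {set {set T}})
    (U : {set T}) (q : nat) (C : seq {set T}) :
  greedy_run S C -> D \subset S -> 0 < q ->
  (forall x, x \in U -> q <= #|[set B in D | x \in B]|) ->
  ((1 - exp (- (INR q / INR #|D| * INR (size C)))) * INR #|U|
     <= INR #|cover_seq C|)%R.
Proof.
move=> run DS q_gt0 multU.
have [-> | [x0 x0U]] := set_0Vmem U.
  by rewrite cards0 /= Rmult_0_r; apply: pos_INR.
(* U is nonempty, so q <= |D| and the ratio a = q/|D| lies in [0, 1]. *)
have qD : q <= #|D|.
  apply: leq_trans (multU x0 x0U) (subset_leq_card _).
  by apply/subsetP => B; rewrite inE => /andP[].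
have Dpos : (0 < INR #|D|)%R by apply: lt_0_INR; apply/ltP; exact: leq_trans qD.
set a := (INR q / INR #|D|)%R.
have aD : (a * INR #|D| = INR q)%R by rewrite /a; field; lra.
have qD_R : (INR q <= INR #|D|)%R by apply/le_INR/leP.
pose g i := INR #|cover_seq (take i C)|.
have <- : g (size C) = INR #|cover_seq C| by rewrite /g take_size.
apply: deficit_recurrence.
- split; last nra.
  by rewrite /a; apply: Rmult_le_pos; [apply: pos_INR | apply/Rlt_le/Rinv_0_lt_compat].
- by rewrite /g take0 /cover_seq big_nil cards0.
- exact: pos_INR.
- move=> i iC; have [greedy_i grow] := greedy_run_step run iC.
  have progress := greedy_progress greedy_i DS multU.
  have Ucovered : #|U| <= #|cover_seq (take i C)| + #|U :\: cover_seq (take i C)|.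
    by rewrite -card_setU_new subset_leq_card // subsetUr.
  move: progress Ucovered => /leP/le_INR progress /leP/le_INR Ucovered.
  rewrite !mult_INR plus_INR in progress Ucovered.
  rewrite /g grow plus_INR.
  apply: (Rmult_le_reg_l (INR #|D|)) => //.
  rewrite -Rmult_assoc (Rmult_comm (INR #|D|)) aD.
  have : (0 <= INR q)%R by apply: pos_INR.
  nra.
Qed.

Lemma bigcup_multicover (T : finType) (D : {set {set T}}) (x : T) :
  x \in \bigcup_(A in D) A -> 0 < #|[set B in D | x \in B]|.
Proof.
by case/bigcupP=> B BD xB; apply/card_gt0P; exists B; rewrite inE BD.
Qed.

Theorem mainTheorem8 (T : finType) (N : {set T}) (S : {set {set T}})
    (K p : nat) (C : seq {set T}) :
  (forall A, A \in S -> A \subset N) ->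
  K <= #|S| ->
  1 <= p ->
  (forall x, x \in N -> p <= #|[set A in S | x \in A]|) ->
  greedy_run S C ->
  size C = K ->
  ((1 - exp (- Rmax (INR p * INR K / INR #|S|) 1)) * INR (OPT S K)
     <= INR #|cover_seq C|)%R.
Proof.
move=> SN KS p_gt0 multN run sizeC.
set r := (INR p * INR K / INR #|S|)%R.
have [r_ge1 | r_lt1] := Rle_lt_dec 1 r.
- (* Many sets per point: compare with the whole ground set N. *)
  rewrite Rmax_left //.
  have S_pos : (0 < INR #|S|)%R.
    apply/lt_0_INR/ltP; case: posnP => // S0.
    have K0 : K = 0 by apply/eqP; rewrite -leqn0 -S0.
    by move: r_ge1; rewrite /r S0 K0 /= Rmult_0_r /Rdiv Rmult_0_l; lra.
  have := greedy_multicover_bound run (subxx S) p_gt0 multN.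
  rewrite sizeC (_ : INR p / INR #|S| * INR K = r)%R; last by rewrite /r; field; lra.
  apply: Rle_trans; apply: Rmult_le_compat_l; first by apply: one_minus_exp_nonneg; lra.
  by apply/le_INR/leP/OPT_le_ground.
- (* Few sets per point: compare with an optimal solution, each of whose points is covered once. *)
  rewrite Rmax_right; last lra.
  have [D [DS DK] ->] := OPT_attained KS.
  have [K0 | K_gt0] := posnP K.
    rewrite (_ : D = set0) ?big_set0 ?cards0 /= ?Rmult_0_r; first exact: pos_INR.
    by apply: cards0_eq; rewrite DK.
  have := greedy_multicover_bound run DS (ltnSn 0) (@bigcup_multicover T D).
  have K_pos : (0 < INR K)%R by apply/lt_0_INR/ltP.
  by rewrite DK sizeC (_ : INR 1 / INR K * INR K = 1)%R //=; field; lra.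
Qed.
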